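(* For every message $M$ and formula $\phi$: $\vdash\neg\langle M\rangle\phi\leftrightarrow\neg[M]\phi$.
   Context: Fix a finite set $\mathcal{A}$ of agent names containing a distinguished name $\mathsf{CM}$. Messages: $M ::= a \mid B \mid (M,M)$ ($a\in\mathcal{A}$, $B$ optional data constants, pairs). $\mathcal{P}$ is a denumerable set of propositional variables containing atoms $\mathsf{k}_a(M)$ (''$a$ knows $M$''). Formulas: $\phi ::= P \mid \phi\wedge\phi \mid \phi\vee\phi \mid \neg\phi \mid \phi\to\phi \mid [M]\phi$. Abbreviations: $\mathrm{true}:=\mathsf{k}_{\mathsf{CM}}(\mathsf{CM})$, $\mathrm{false}:=\neg\mathrm{true}$, $\phi\leftrightarrow\psi:=(\phi\to\psi)\wedge(\psi\to\phi)$, $\langle M\rangle\phi:=\neg\neg(\mathsf{k}_{\mathsf{CM}}(M)\wedge\phi)$. LIiP is the smallest set of formulas containing all instances of: the axioms of an adequate Hilbert axiomatization of intuitionistic propositional logic; $\mathsf{k}_a(a)$; $(\mathsf{k}_a(M)\wedge\mathsf{k}_a(M'))\leftrightarrow\mathsf{k}_a((M,M'))$; $[M]\mathsf{k}_{\mathsf{CM}}(M)$; $[M](\phi\to\psi)\to([M]\phi\to[M]\psi)$; $[M]\phi\to(\mathsf{k}_{\mathsf{CM}}(M)\to\phi)$; $[M]\phi\to\langle M\rangle\phi$; $\phi\to[M]\phi$; and closed under modus ponens and the rule: if $\mathsf{k}_{\mathsf{CM}}(M)\to\mathsf{k}_{\mathsf{CM}}(M')$ is in the set then so is $[M']\phi\to[M]\phi$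 for every $\phi$. Write $\vdash\phi$ for $\phi\in\mathrm{LIiP}$. *)

From mathcomp Require Import all_boot.
Set Implicit Arguments.

Section LIiP.
Variables (Agent : finType) (CM : Agent) (Data : Type).

Inductive msg : Type :=
| MAgent : Agent -> msg
| MData : Data -> msg
| MPair : msg -> msg -> msg.

Inductive form : Type :=
| PVar : nat -> form
| Pk : Agent -> msg -> form
| FAnd : form -> form -> form
| FOr : form -> form -> form
| FNot : form -> form
| FImp : form -> form -> form
| FBox : msg -> form -> form.

Definition ftrue : form := Pk CM (MAgent CM).
Definition ffalse : form := FNot ftrue.
Definition FIff (p q : form) : form := FAnd (FImp p q) (FImp q p).
Definition FDia (M : msg) (p : form) : form :=
  FNot (FNot (FAnd (Pk CM M) p)).

(* LIiP: smallest set containing the axioms, closed under MP and the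
   monotonicity rule.  IPC part: a standard adequate Hilbert system
   (Kleene's axiomatization with primitive negation). *)
Inductive LIiP : form -> Prop :=
| ax_K p q : LIiP (FImp p (FImp q p))
| ax_S p q r : LIiP (FImp (FImp p (FImp q r)) (FImp (FImp p q) (FImp p r)))
| ax_AndI p q : LIiP (FImp p (FImp q (FAnd p q)))
| ax_AndE1 p q : LIiP (FImp (FAnd p q) p)
| ax_AndE2 p q : LIiP (FImp (FAnd p q) q)
| ax_OrI1 p q : LIiP (FImp p (FOr p q))
| ax_OrI2 p q : LIiP (FImp q (FOr p q))
| ax_OrE p q r :
    LIiP (FImp (FImp p r) (FImp (FImp q r) (FImp (FOr p q) r)))
| ax_NotI p q : LIiP (FImp (FImp p q) (FImp (FImp p (FNot q)) (FNot p)))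
| ax_NotE p q : LIiP (FImp p (FImp (FNot p) q))
| ax_kself a : LIiP (Pk a (MAgent a))
| ax_kpair a M M' :
    LIiP (FIff (FAnd (Pk a M) (Pk a M')) (Pk a (MPair M M')))
| ax_boxk M : LIiP (FBox M (Pk CM M))
| ax_boxK M p q : LIiP (FImp (FBox M (FImp p q)) (FImp (FBox M p) (FBox M q)))
| ax_boxT M p : LIiP (FImp (FBox M p) (FImp (Pk CM M) p))
| ax_boxDia M p : LIiP (FImp (FBox M p) (FDia M p))
| ax_boxIntro M p : LIiP (FImp p (FBox M p))
| r_MP p q : LIiP (FImp p q) -> LIiP p -> LIiP q
| r_mono M M' p :
    LIiP (FImp (Pk CM M) (Pk CM M')) -> LIiP (FImp (FBox M' p) (FBox M p)).

End LIiP.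

From mathcomp Require Import all_boot.

Set Implicit Arguments.

(* [M]phi -> <M>phi is an axiom, so its contrapositive gives one direction.
   For the other, k_CM(M) /\ phi -> phi -> [M]phi, hence ~[M]phi entails
   ~(k_CM(M) /\ phi), which intuitionistically entails its triple negation
   ~<M>phi. *)

Section HilbertCalculus.
Variables (Agent : finType) (CM : Agent) (Data : Type).
Notation form := (form Agent Data).
Notation thm := (LIiP CM).

Lemma imp_refl (p : form) : thm (FImp p p).
Proof. exact: r_MP (r_MP (ax_S _ p (FImp p p) p) (ax_K _ _ _)) (ax_K _ _ _). Qed.

Lemma imp_const (p q : form) : thm q -> thm (FImp p q).
Proof. exact: r_MP (ax_K _ q p). Qed.

Lemma imp_app (p q r : form) :
  thm (FImp p (FImp q r)) -> thm (FImp p q) -> thm (FImp p r).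
Proof. by move=> Hqr Hq; apply: r_MP Hq; apply: r_MP Hqr; apply: ax_S. Qed.

Lemma imp_trans (p q r : form) :
  thm (FImp p q) -> thm (FImp q r) -> thm (FImp p r).
Proof. by move=> Hpq Hqr; apply: imp_app (imp_const p Hqr) Hpq. Qed.

Lemma imp_contra (p q : form) : thm (FImp p q) -> thm (FImp (FNot q) (FNot p)).
Proof. by move=> Hpq; apply: imp_trans (ax_K _ (FNot q) p) (r_MP (ax_NotI _ p q) Hpq). Qed.

Lemma imp_notnot (p : form) : thm (FImp p (FNot (FNot p))).
Proof.
have Hnot_p_imp_p := ax_K CM p (FNot p).
have Hnot_p_imp_not_p := imp_const p (imp_refl (FNot p)).
exact: imp_app (imp_app (imp_const p (ax_NotI _ _ _)) Hnot_p_imp_p) Hnot_p_imp_not_p.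
Qed.

Lemma iff_intro (p q : form) :
  thm (FImp p q) -> thm (FImp q p) -> thm (FIff p q).
Proof. by move=> Hpq Hqp; apply: r_MP Hqp; apply: r_MP Hpq; apply: ax_AndI. Qed.

End HilbertCalculus.

Theorem theorem2p14 (Agent : finType) (CM : Agent) (Data : Type)
  (M : msg Agent Data) (phi : form Agent Data) :
  LIiP CM (FIff (FNot (FDia CM M phi)) (FNot (FBox M phi))).
Proof.
set known_phi := FAnd (Pk CM M) phi.
have box_of_known : LIiP CM (FImp known_phi (FBox M phi)).
  exact: imp_trans (ax_AndE2 _ _ _) (ax_boxIntro _ _ _).
apply: iff_intro; first exact: imp_contra (ax_boxDia _ _ _).
exact: imp_trans (imp_contra box_of_known) (imp_notnot CM (FNot known_phi)).
Qed.
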